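(* Let $N$ be a well-formed system (coherent and $\vdash N:\mathbf{ok}$) in the calculus with DFA entry policies. If $N\to N'$, then $N'$ is well-formed; in particular $\vdash N':\mathbf{ok}$.
   Context: Fix disjoint sets $\mathsf{Act}$ (actions) and $\mathsf{Loc}$ (localities). A policy is a minimal DFA $A=(S,\Sigma,s_0,F,\delta)$ with finite $\Sigma\subseteq\mathsf{Act}\cup\mathsf{Loc}$, $\emptyset\ne F\subseteq S$, $\delta:S\times\Sigma\to S$. $Acp_s(A)$ is the set of words in $\Sigma^*$ leading from $s$ to a final state, $Acp(A)=Acp_{s_0}(A)$, and $A_1\ \mathtt{enforces}\ A_2$ iff $Acp(A_1)\subseteq Acp(A_2)$. Agents: $P ::= \mathbf{nil} \mid a.P \mid \mathbf{go}_A\, l.P \mid P\,|\,Q \mid\ !P$. Concurrent regular expressions $e::=\epsilon\mid\alpha\mid e_1.e_2\mid e_1\odot e_2\mid e^{\otimes}$ with $lang(\epsilon)=\{\epsilon\}$, $lang(\alpha)=\{\alpha\}$, $lang(e_1.e_2)=\{x_1x_2: x_i\in lang(e_i)\}$, $lang(e_1\odot e_2)=\{x_1y_1\cdots x_ny_n : x_1\cdots x_n\in lang(e_1), y_1\cdots y_n\in lang(e_2)\}$ (components may be empty), $lang(e^\otimes)=\bigcup_{i\ge0}L^{\otimes i}$ with $L=lang(e)$, $L^{\otimes0}=\{\epsilon\}$, $L^{\otimes i}=L^{\otimes(i-1)}\odot L$. $\mathrm{CRE}(\mathbf{nil})=\epsilon$, $\mathrm{CRE}(a.P)=a.\mathrm{CRE}(P)$,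 $\mathrm{CRE}(\mathbf{go}_A\,l.P)=l$, $\mathrm{CRE}(P_1|P_2)=\mathrm{CRE}(P_1)\odot\mathrm{CRE}(P_2)$, $\mathrm{CRE}(!P)=\mathrm{CRE}(P)^\otimes$. $\vdash P:A$ iff $lang(\mathrm{CRE}(P))\subseteq Acp(A)$ and $\vdash Q:A'$ for every subterm $\mathbf{go}_{A'}\,l.Q$ of $P$. Systems: $N ::= \mathbf{0} \mid l[\![M \rhd P]\!] \mid N_1\parallel N_2$, site names pairwise distinct; membrane $M=(M_t,M_p)$, $M_t$ a partial function $\mathsf{Loc}\to\{\mathtt{loc},\mathtt{lgood},\mathtt{lbad}\}$, $M_p$ a policy. Structural equivalence: least congruence such that inside a site $|$ is commutative, associative with unit $\mathbf{nil}$, $l[\![M\rhd\ !P|Q]\!]\equiv l[\![M\rhd P|!P|Q]\!]$, and $\parallel$ commutative, associative with unit $\mathbf{0}$. Reduction: (act) $l[\![M\rhd a.P|Q]\!]\to l[\![M\rhd P|Q]\!]$; (par) $N_1\to N_1'$ implies $N_1\parallel N_2\to N_1'\parallel N_2$; (struct) $N\equiv N_1\to N_1'\equiv N'$ implies $N\to N'$; (mig) $k[\![M^k\rhd\mathbf{go}_A\,l.P|Q]\!]\parallel l[\![M^l\rhd R]\!]\to k[\![M^k\rhd Q]\!]\parallel l[\![M^l\rhd P|R]\!]$ provided: if $M^l_t(k)=\mathtt{lgood}$ then $Acp(A)\subseteq Acp(M^l_p)$, else $\vdash P:M^l_p$. Trust order $<:$ reflexive with $\mathtt{loc}<:\mathtt{lbad}$,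 $\mathtt{loc}<:\mathtt{lgood}$; $k$ trustworthy iff $M^k_t(k)=\mathtt{lgood}$; $N$ coherent iff for every trustworthy $k$ and site $l$ with $M^k_t(l)$ defined, $M^k_t(l)<:M^l_t(l)$. A thread is an agent not of the form $P_1|P_2$. $\vdash N:\mathbf{ok}$: $\vdash\mathbf{0}:\mathbf{ok}$; $\vdash N_1\parallel N_2:\mathbf{ok}$ if both are; $\vdash l[\![M\rhd P_1|\dots|P_n]\!]:\mathbf{ok}$ if $l$ is trustworthy and each $P_i$ is a thread such that there is a state $s$ of $M_p$ with $lang(\mathrm{CRE}(P_i))\subseteq Acp_s(M_p)$, and moreover $\vdash Q:A'$ for every subterm $\mathbf{go}_{A'}\,h.Q$ of $P_i$; $\vdash l[\![M\rhd P]\!]:\mathbf{ok}$ if $l$ not trustworthy. *)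

From mathcomp Require Import all_boot.
From Stdlib Require List.

Set Implicit Arguments.
Unset Strict Implicit.
Unset Printing Implicit Defensive.

Section Calculus.

(* The two disjoint sets of actions and localities; disjointness is
   built in by taking the alphabet of symbols to be their disjoint sum. *)
Variables Act Loc : Type.

Definition sym := (Act + Loc)%type.
Definition word := list sym.

Record dfa := Dfa {
  dstate : finType;
  dalph  : seq sym;
  dstart : dstate;
  dfinal : pred dstate;
  dtrans : dstate -> sym -> dstate  (* delta (only its values on Sigma matter) *)
}.

Definition over_alph (A : dfa) (w : word) : Prop :=
  forall x, List.In x w -> List.In x (dalph A).

Definition Acp_s (A : dfa) (s : dstate A) (w : word) : Prop :=
  over_alph A w /\ @dfinal A (foldl (@dtrans A) s w).

Definition Acp (A : dfa) (w : word) : Prop := Acp_s (dstart A) w.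

Definition dfa_minimal (A : dfa) : Prop :=
  (forall s : dstate A, exists w, over_alph A w /\ foldl (@dtrans A) (dstart A) w = s)
  /\ (forall s t : dstate A, (forall w, Acp_s s w <-> Acp_s t w) -> s = t).

Definition is_policy (A : dfa) : Prop :=
  (exists s : dstate A, @dfinal A s) /\ dfa_minimal A.

Definition enforces (A1 A2 : dfa) : Prop := forall w, Acp A1 w -> Acp A2 w.

Inductive proc :=
  | pnil : proc
  | pact : Act -> proc -> proc
  | pgo  : dfa -> Loc -> proc -> proc
  | ppar : proc -> proc -> proc
  | pbang : proc -> proc.

Inductive subterm (Q : proc) : proc -> Prop :=
  | sub_refl : subterm Q Q
  | sub_act a P : subterm Q P -> subterm Q (pact a P)
  | sub_go A l P : subterm Q P -> subterm Q (pgo A l P)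
  | sub_parl P1 P2 : subterm Q P1 -> subterm Q (ppar P1 P2)
  | sub_parr P1 P2 : subterm Q P2 -> subterm Q (ppar P1 P2)
  | sub_bang P : subterm Q P -> subterm Q (pbang P).

Inductive cre :=
  | ceps : cre
  | csym : sym -> cre
  | ccat : cre -> cre -> cre
  | cshuf : cre -> cre -> cre
  | cstar : cre -> cre.

(* L1 (.) L2 = { x1 y1 ... xn yn | x1...xn in L1, y1...yn in L2 },
   components possibly empty. *)
Definition shuffle (L1 L2 : word -> Prop) (w : word) : Prop :=
  exists xs ys : seq word,
    size xs = size ys /\ L1 (flatten xs) /\ L2 (flatten ys) /\
    w = flatten [seq p.1 ++ p.2 | p <- zip xs ys].

Fixpoint lang (e : cre) : word -> Prop :=
  match e with
  | ceps => fun w => w = [::]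
  | csym a => fun w => w = [:: a]
  | ccat e1 e2 => fun w => exists x1 x2, w = x1 ++ x2 /\ lang e1 x1 /\ lang e2 x2
  | cshuf e1 e2 => shuffle (lang e1) (lang e2)
  | cstar e1 => fun w =>
      exists i : nat, iter i (fun L => shuffle L (lang e1)) (fun v => v = [::]) w
  end.

Fixpoint CRE (P : proc) : cre :=
  match P with
  | pnil => ceps
  | pact a P' => ccat (csym (inl a)) (CRE P')
  | pgo _ l _ => csym (inr l)
  | ppar P1 P2 => cshuf (CRE P1) (CRE P2)
  | pbang P' => cstar (CRE P')
  end.

(* every go-subterm  go_{A'} l.Q  of P satisfies lang(CRE Q) <= Acp(A');
   since subterms of subterms are subterms, this unfolds the recursive
   requirement "|- Q : A' for every subterm go_{A'} l.Q of P". *)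
Definition go_subterms_ok (P : proc) : Prop :=
  forall A' l Q, subterm (pgo A' l Q) P ->
    forall w, lang (CRE Q) w -> Acp A' w.

Definition wt (P : proc) (A : dfa) : Prop :=
  (forall w, lang (CRE P) w -> Acp A w) /\ go_subterms_ok P.

Inductive trust := tloc | lgood | lbad.

Definition trust_le (t t' : trust) : Prop :=
  t = t' \/ (t = tloc /\ (t' = lbad \/ t' = lgood)).

Record membrane := Membrane {
  mtrust : Loc -> option trust;
  mpol   : dfa
}.

Inductive system :=
  | s0 : system
  | ssite : Loc -> membrane -> proc -> system
  | spar : system -> system -> system.

Fixpoint sites (N : system) : list (Loc * membrane * proc) :=
  match N with
  | s0 => nil
  | ssite l M P => (l, M, P) :: nil
  | spar N1 N2 => sites N1 ++ sites N2
  end.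

Definition distinct_names (N : system) : Prop :=
  List.NoDup (List.map (fun x => fst (fst x)) (sites N)).

Definition policies_ok (N : system) : Prop :=
  forall l M P, List.In (l, M, P) (sites N) ->
    is_policy (mpol M) /\
    (forall A' h Q, subterm (pgo A' h Q) P -> is_policy A').

Inductive peq : proc -> proc -> Prop :=
  | peq_refl P : peq P P
  | peq_sym P Q : peq P Q -> peq Q P
  | peq_trans P Q R : peq P Q -> peq Q R -> peq P R
  | peq_act a P Q : peq P Q -> peq (pact a P) (pact a Q)
  | peq_go A l P Q : peq P Q -> peq (pgo A l P) (pgo A l Q)
  | peq_par P P' Q Q' : peq P P' -> peq Q Q' -> peq (ppar P Q) (ppar P' Q')
  | peq_bang P Q : peq P Q -> peq (pbang P) (pbang Q)
  | peq_comm P Q : peq (ppar P Q) (ppar Q P)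
  | peq_assoc P Q R : peq (ppar (ppar P Q) R) (ppar P (ppar Q R))
  | peq_unit P : peq (ppar P pnil) P.

Inductive seqv : system -> system -> Prop :=
  | seqv_refl N : seqv N N
  | seqv_sym N1 N2 : seqv N1 N2 -> seqv N2 N1
  | seqv_trans N1 N2 N3 : seqv N1 N2 -> seqv N2 N3 -> seqv N1 N3
  | seqv_par N1 N1' N2 N2' : seqv N1 N1' -> seqv N2 N2' -> seqv (spar N1 N2) (spar N1' N2')
  | seqv_site l M P Q : peq P Q -> seqv (ssite l M P) (ssite l M Q)
  | seqv_bang l M P Q :
      seqv (ssite l M (ppar (pbang P) Q)) (ssite l M (ppar P (ppar (pbang P) Q)))
  | seqv_comm N1 N2 : seqv (spar N1 N2) (spar N2 N1)
  | seqv_assoc N1 N2 N3 : seqv (spar (spar N1 N2) N3) (spar N1 (spar N2 N3))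
  | seqv_unit N : seqv (spar N s0) N.

Definition mig_ok (k : Loc) (Ml : membrane) (A : dfa) (P : proc) : Prop :=
  if mtrust Ml k is Some lgood then enforces A (mpol Ml) else wt P (mpol Ml).

Inductive red : system -> system -> Prop :=
  | red_act l M a P Q : red (ssite l M (ppar (pact a P) Q)) (ssite l M (ppar P Q))
  | red_par N1 N1' N2 : red N1 N1' -> red (spar N1 N2) (spar N1' N2)
  | red_struct N N1 N1' N' : seqv N N1 -> red N1 N1' -> seqv N1' N' -> red N N'
  | red_mig k Mk A l P Q Ml R :
      mig_ok k Ml A P ->
      red (spar (ssite k Mk (ppar (pgo A l P) Q)) (ssite l Ml R))
          (spar (ssite k Mk Q) (ssite l Ml (ppar P R))).

Definition trustworthy (N : system) (k : Loc) : Prop :=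
  exists M P, List.In (k, M, P) (sites N) /\ mtrust M k = Some lgood.

Definition coherent (N : system) : Prop :=
  forall k Mk Pk l Ml Pl t,
    List.In (k, Mk, Pk) (sites N) -> mtrust Mk k = Some lgood ->
    List.In (l, Ml, Pl) (sites N) -> mtrust Mk l = Some t ->
    exists t', mtrust Ml l = Some t' /\ trust_le t t'.

Fixpoint threads (P : proc) : list proc :=
  match P with
  | ppar P1 P2 => threads P1 ++ threads P2
  | _ => P :: nil
  end.

Definition site_ok (l : Loc) (M : membrane) (P : proc) : Prop :=
  mtrust M l = Some lgood ->
  forall T, List.In T (threads P) ->
    (exists s : dstate (mpol M), forall w, lang (CRE T) w -> Acp_s s w)
    /\ go_subterms_ok T.

Fixpoint ok (N : system) : Prop :=
  match N with
  | s0 => True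
  | ssite l M P => site_ok l M P
  | spar N1 N2 => ok N1 /\ ok N2
  end.

End Calculus.

From Pilot Require Import Defs.
From mathcomp Require Import all_boot.
From Stdlib Require List.

(* Reduction and structural congruence only move agents between sites, so the
   set of (site, membrane) pairs of a system is invariant, and coherence depends
   on nothing else.  For [ok], the invariant is that every thread of a trusted
   site is typable from some state of its policy.  Congruence preserves the
   language of an agent's concurrent regular expression (shuffle is associative
   and commutative with unit {ε}) and its migration annotations.  A thread of P
   is typable from the state reached by any word the other threads produce
   first; this types the continuation of an action, one unfolding of !P, and a
   migrated agent. *)

Set Implicit Arguments.
Unset Strict Implicit.
Unset Printing Implicit Defensive.

Section Interleaving.
Variable T : Type.

Inductive interleave : seq T -> seq T -> seq T -> Prop :=
  | interleave_nil : interleave [::] [::] [::]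
  | interleave_consl a x y w : interleave x y w -> interleave (a :: x) y (a :: w)
  | interleave_consr a x y w : interleave x y w -> interleave x (a :: y) (a :: w).

Lemma interleave_nilr x : interleave x [::] x.
Proof. by elim: x => [|a x IHx]; constructor. Qed.

Lemma interleave_nill y : interleave [::] y y.
Proof. by elim: y => [|a y IHy]; constructor. Qed.

Lemma interleave_cat x y w x' y' w' :
  interleave x y w -> interleave x' y' w' -> interleave (x ++ x') (y ++ y') (w ++ w').
Proof. by move=> H H'; elim: H => //= *; constructor. Qed.

Lemma interleave_catl x y : interleave x y (x ++ y).
Proof. by have := interleave_cat (interleave_nilr x) (interleave_nill y); rewrite cats0. Qed.

Lemma interleave_catr x y : interleave x y (y ++ x).
Proof. by have := interleave_cat (interleave_nill y) (interleave_nilr x); rewrite cats0. Qed.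

Lemma interleaveC x y w : interleave x y w -> interleave y x w.
Proof. by elim=> *; constructor. Qed.

Lemma interleave_nilr_inv x w : interleave x [::] w -> w = x.
Proof.
move E: [::] => e H; elim: H E => [//|a x' y' w' _ IH /IH -> //|//].
Qed.

Lemma interleaveA x y z u w :
  interleave x y u -> interleave u z w -> exists2 v, interleave y z v & interleave x v w.
Proof.
move=> Hxy Huw; elim: Huw x y Hxy => [|a u' z' w' _ IH|a u' z' w' _ IH] x y Hxy.
- by inversion Hxy; exists [::]; constructor.
- inversion Hxy as [|? x' ? ? Hxy'|? ? y' ? Hxy']; subst.
  + by have [v Hyz Hxv] := IH _ _ Hxy'; exists v; last constructor.
  + by have [v Hyz Hxv] := IH _ _ Hxy'; exists (a :: v); constructor.
- by have [v Hyz Hxv] := IH _ _ Hxy; exists (a :: v); constructor.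
Qed.

Lemma interleave_flatten (xs ys : seq (seq T)) : size xs = size ys ->
  interleave (flatten xs) (flatten ys) (flatten [seq p.1 ++ p.2 | p <- zip xs ys]).
Proof.
elim: xs ys => [|x xs IH] [|y ys] //= => [_|[Hs]]; first exact: interleave_nil.
exact: interleave_cat (interleave_catl x y) (IH ys Hs).
Qed.

Lemma interleave_flattenP x y w : interleave x y w ->
  exists xs ys : seq (seq T), [/\ size xs = size ys, flatten xs = x, flatten ys = y
    & w = flatten [seq p.1 ++ p.2 | p <- zip xs ys]].
Proof.
elim=> [|a {}x {}y {}w _ [xs [ys [Hs <- <- ->]]]|a {}x {}y {}w _ [xs [ys [Hs <- <- ->]]]].
- by exists [::], [::].
- by exists ([:: a] :: xs), ([::] :: ys); rewrite /= Hs.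
- by exists ([::] :: xs), ([:: a] :: ys); rewrite /= Hs.
Qed.

End Interleaving.

Section Calculus.
Variables Act Loc : Type.
Notation word := (word Act Loc).
Notation proc := (proc Act Loc).
Notation system := (system Act Loc).
Notation membrane := (membrane Act Loc).
Implicit Types (L : word -> Prop) (e : cre Act Loc) (P Q R : proc) (M : membrane).

Lemma In_cat (X : Type) (x : X) (s1 s2 : seq X) :
  List.In x (s1 ++ s2) <-> List.In x s1 \/ List.In x s2.
Proof. exact: List.in_app_iff. Qed.

Lemma shuffleE L1 L2 w :
  shuffle L1 L2 w <-> exists x y, [/\ L1 x, L2 y & interleave x y w].
Proof.
split=> [[xs [ys [Hs [H1 [H2 ->]]]]]|[x [y [H1 H2 /interleave_flattenP]]]].
  by exists (flatten xs), (flatten ys); split; last exact: interleave_flatten.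
by move=> [xs [ys [Hs Ex Ey ->]]]; exists xs, ys; rewrite Ex Ey.
Qed.

Lemma shuffle_mono L1 L2 L1' L2' :
  (forall w, L1 w -> L1' w) -> (forall w, L2 w -> L2' w) ->
  forall w, shuffle L1 L2 w -> shuffle L1' L2' w.
Proof. by move=> H1 H2 w [xs [ys [Hs [/H1 ? [/H2 ? ->]]]]]; exists xs, ys. Qed.

Lemma shuffleC L1 L2 w : shuffle L1 L2 w -> shuffle L2 L1 w.
Proof.
by rewrite !shuffleE => -[x [y [H1 H2 /interleaveC Hw]]]; exists y, x.
Qed.

Lemma shuffleA L1 L2 L3 w :
  shuffle (shuffle L1 L2) L3 w <-> shuffle L1 (shuffle L2 L3) w.
Proof.
rewrite !shuffleE; split.
  move=> [u [z [/shuffleE[x [y [H1 H2 Hxy]]] H3 Huw]]].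
  have [v Hyz Hxv] := interleaveA Hxy Huw.
  by exists x, v; split=> //; apply/shuffleE; exists y, z.
move=> [x [v [H1 /shuffleE[y [z [H2 H3 /interleaveC Hzy]]] /interleaveC Hvw]]].
have [u /interleaveC Hxy /interleaveC Huw] := interleaveA Hzy Hvw.
by exists u, z; split=> //; apply/shuffleE; exists x, y.
Qed.

Lemma shuffle_eps L w : shuffle L (fun v => v = [::]) w <-> L w.
Proof.
rewrite shuffleE; split=> [[x [_ [Hx -> /interleave_nilr_inv ->]]] //|Hw].
by exists w, [::]; split=> //; exact: interleave_nilr.
Qed.

Lemma lang_star_mono e e' : (forall w, lang e w -> lang e' w) ->
  forall w, lang (cstar e) w -> lang (cstar e') w.
Proof.
move=> H w [i Hi]; exists i; elim: i w Hi => //= i IH.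
exact: shuffle_mono.
Qed.

Lemma lang_star e w : lang e w -> lang (cstar e) w.
Proof. by move=> Hw; exists 1; apply/shuffleC/shuffle_eps. Qed.

Lemma lang_nonempty e : exists w, lang e w.
Proof.
elim: e => [|a|e1 [x1 H1] e2 [x2 H2]|e1 [x1 H1] e2 [x2 H2]|e _].
- by exists [::].
- by exists [:: a].
- by exists (x1 ++ x2), x1, x2.
- exists (x1 ++ x2); apply/shuffleE; exists x1, x2; split=> //.
  exact: interleave_catl.
- by exists [::], 0.
Qed.

Lemma lang_peq P Q : peq P Q -> forall w, lang (CRE P) w <-> lang (CRE Q) w.
Proof.
elim=> {P Q} /=.
- by [].
- by move=> P Q _ IH w; rewrite IH.
- by move=> P Q R _ IH1 _ IH2 w; rewrite IH1 IH2.
- by move=> a P Q _ IH w; split=> -[x1 [x2 [-> [Ha /IH Hx2]]]]; exists x1, x2.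
- by [].
- move=> P P' Q Q' _ IH1 _ IH2 w.
  by split; apply: shuffle_mono => v; first [apply IH1 | apply IH2].
- by move=> P Q _ IH w; split; apply: lang_star_mono => v /IH.
- by move=> P Q w; split; apply: shuffleC.
- by move=> P Q R w; apply: shuffleA.
- by move=> P w; apply: shuffle_eps.
Qed.

Lemma go_subterms_ok_nil : go_subterms_ok (pnil Act Loc).
Proof. by move=> A l Q Hs; inversion Hs. Qed.

Lemma go_subterms_ok_act a P : go_subterms_ok (pact a P) <-> go_subterms_ok P.
Proof.
split=> H A l Q Hs; first exact: H (sub_act a Hs).
by inversion Hs; eapply H; eassumption.
Qed.

Lemma go_subterms_ok_go A l P : go_subterms_ok (pgo A l P) <-> wt P A.
Proof.
split=> [H|[HP H] A' l' Q Hs].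
  split; first exact: H _ _ _ (Defs.sub_refl _).
  by move=> A' l' Q Hs; apply: H (sub_go A l Hs).
by inversion Hs; subst; [apply: HP | eapply H; eassumption].
Qed.

Lemma go_subterms_ok_par P Q :
  go_subterms_ok (ppar P Q) <-> go_subterms_ok P /\ go_subterms_ok Q.
Proof.
split=> [H|[HP HQ] A l R Hs].
  by split=> A l R Hs; [exact: H (sub_parl _ Hs) | exact: H (sub_parr _ Hs)].
by inversion Hs; [eapply HP | eapply HQ]; eassumption.
Qed.

Lemma go_subterms_ok_bang P : go_subterms_ok (pbang P) <-> go_subterms_ok P.
Proof.
split=> H A l Q Hs; first exact: H (sub_bang Hs).
by inversion Hs; eapply H; eassumption.
Qed.

Lemma go_subterms_ok_peq P Q : peq P Q -> go_subterms_ok P <-> go_subterms_ok Q.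
Proof.
elim=> {P Q}.
- by [].
- by move=> P Q _ IH; rewrite IH.
- by move=> P Q R _ IH1 _ IH2; rewrite IH1 IH2.
- by move=> a P Q _ IH; rewrite !go_subterms_ok_act.
- move=> A l P Q HPQ IH; rewrite !go_subterms_ok_go /wt IH.
  by split=> -[H ?]; split=> // w /(lang_peq HPQ) /H.
- by move=> P P' Q Q' _ IH1 _ IH2; rewrite !go_subterms_ok_par IH1 IH2.
- by move=> P Q _ IH; rewrite !go_subterms_ok_bang.
- by move=> P Q; rewrite !go_subterms_ok_par; tauto.
- by move=> P Q R; rewrite !go_subterms_ok_par; tauto.
- by move=> P; rewrite go_subterms_ok_par; have := go_subterms_ok_nil; tauto.
Qed.

Lemma Acp_s_suffix (A : dfa Act Loc) (s : dstate A) y x :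
  Acp_s s (y ++ x) -> Acp_s (foldl (@dtrans _ _ A) s y) x.
Proof.
by move=> [Hy Hf]; split; [move=> z Hz; apply/Hy/In_cat; right | rewrite -foldl_cat].
Qed.

Lemma lang_thread_suffix P T : List.In T (threads P) ->
  exists y, forall x, lang (CRE T) x -> lang (CRE P) (y ++ x).
Proof.
elim: P => [|a P _|A l P _|P1 IH1 P2 IH2|P _] /=; try by move=> [<-|[]]; exists [::].
move=> /In_cat[/IH1 [y Hy] | /IH2 [y Hy]].
- have [y2 Hy2] := lang_nonempty (CRE P2).
  exists (y2 ++ y) => x /Hy Hx; apply/shuffleE; exists (y ++ x), y2; split=> //.
  by rewrite -catA; apply: interleave_catr.
- have [y1 Hy1] := lang_nonempty (CRE P1).
  exists (y1 ++ y) => x /Hy Hx; apply/shuffleE; exists y1, (y ++ x); split=> //.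
  by rewrite -catA; apply: interleave_catl.
Qed.

Lemma go_subterms_ok_thread P T :
  List.In T (threads P) -> go_subterms_ok P -> go_subterms_ok T.
Proof.
elim: P => [|a P _|A l P _|P1 IH1 P2 IH2|P _] /=; try by move=> [<-|[]].
by move=> /In_cat[/IH1 | /IH2] H /go_subterms_ok_par[]; auto.
Qed.

Definition thread_ok M T :=
  (exists s : dstate (mpol M), forall w, lang (CRE T) w -> Acp_s s w) /\ go_subterms_ok T.

Definition threads_ok M P := forall T, List.In T (threads P) -> thread_ok M T.

Lemma threads_ok_par M P Q :
  threads_ok M (ppar P Q) <-> threads_ok M P /\ threads_ok M Q.
Proof.
rewrite /threads_ok /=; split=> [H|[HP HQ] T /In_cat[/HP|/HQ]] //.
by split=> T HT; apply: H; apply/In_cat; [left | right].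
Qed.

Lemma threads_ok_thread M P : threads P = [:: P] -> threads_ok M P <-> thread_ok M P.
Proof.
rewrite /threads_ok => ->; split=> [H | H T [<- | []]] //.
by apply: H; left.
Qed.

Lemma threads_ok_of_state M P (s : dstate (mpol M)) :
  (forall w, lang (CRE P) w -> Acp_s s w) -> go_subterms_ok P -> threads_ok M P.
Proof.
move=> HP Hgo T HT; split; last exact: go_subterms_ok_thread HT Hgo.
have [y Hy] := lang_thread_suffix HT.
by exists (foldl (@dtrans _ _ (mpol M)) s y) => x /Hy /HP /Acp_s_suffix.
Qed.

Lemma threads_ok_act M a P : threads_ok M (pact a P) -> threads_ok M P.
Proof.
rewrite threads_ok_thread // => -[[s Hs] /go_subterms_ok_act Hgo].
apply: (threads_ok_of_state (s := dtrans s (inl a))) Hgo => w Hw.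
by apply: (Acp_s_suffix (y := [:: inl a])); apply: Hs; exists [:: inl a], w.
Qed.

Lemma threads_ok_bang M P : threads_ok M (pbang P) -> threads_ok M P.
Proof.
rewrite threads_ok_thread // => -[[s Hs] /go_subterms_ok_bang Hgo].
by apply: (threads_ok_of_state (s := s)) Hgo => w /lang_star /Hs.
Qed.

Lemma thread_ok_peq M P Q : peq P Q -> thread_ok M P -> thread_ok M Q.
Proof.
move=> HPQ [[s Hs] Hgo]; split; last exact/(go_subterms_ok_peq HPQ).
by exists s => w /(lang_peq HPQ) /Hs.
Qed.

Lemma thread_ok_nil M : (exists s : dstate (mpol M), dfinal s) -> thread_ok M (pnil Act Loc).
Proof.
move=> [s Hs]; split; last exact: go_subterms_ok_nil.
by exists s => w /= ->; split=> // x [].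
Qed.

(* A final state is needed to type the thread [nil] created by the unit law. *)
Lemma threads_ok_peq M P Q : (exists s : dstate (mpol M), dfinal s) ->
  peq P Q -> threads_ok M P <-> threads_ok M Q.
Proof.
move=> Hfin; elim=> {P Q}; try by move=> *; rewrite ?threads_ok_par; tauto.
- by move=> a P Q HPQ _; rewrite !threads_ok_thread //; split; apply: thread_ok_peq;
    [apply: peq_act | apply/peq_act/peq_sym].
- by move=> A l P Q HPQ _; rewrite !threads_ok_thread //; split; apply: thread_ok_peq;
    [apply: peq_go | apply/peq_go/peq_sym].
- by move=> P Q HPQ _; rewrite !threads_ok_thread //; split; apply: thread_ok_peq;
    [apply: peq_bang | apply/peq_bang/peq_sym].
- move=> P; rewrite threads_ok_par (threads_ok_thread M (P:=pnil Act Loc)) //.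
  by have := thread_ok_nil Hfin; tauto.
Qed.

Definition hosts (N : system) l M := exists P, List.In (l, M, P) (sites N).

Definition hosts_incl (N1 N2 : system) := forall l M, hosts N1 l M -> hosts N2 l M.

Definition same_hosts (N1 N2 : system) := forall l M, hosts N1 l M <-> hosts N2 l M.

Definition final_states_nonempty (N : system) :=
  forall l M, hosts N l M -> exists s : dstate (mpol M), dfinal s.

Lemma hosts_s0 l M : ~ hosts (s0 Act Loc) l M.
Proof. by move=> [P] /= []. Qed.

Lemma hosts_site l M P l' M' : hosts (ssite l M P) l' M' <-> (l', M') = (l, M).
Proof. by split=> [[P' [[<- <- _]|[]]] | [-> ->]] //; exists P; left. Qed.

Lemma hosts_par N1 N2 l M : hosts (spar N1 N2) l M <-> hosts N1 l M \/ hosts N2 l M.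
Proof.
split; first by move=> [P /In_cat[H|H]]; [left | right]; exists P.
by move=> [[P H]|[P H]]; exists P; apply/In_cat; [left | right].
Qed.

Lemma hosts_incl_parl N1 N2 : hosts_incl N1 (spar N1 N2).
Proof. by move=> l M H; apply/hosts_par; left. Qed.

Lemma hosts_incl_parr N1 N2 : hosts_incl N2 (spar N1 N2).
Proof. by move=> l M H; apply/hosts_par; right. Qed.

Lemma seqv_same_hosts N1 N2 : seqv N1 N2 -> same_hosts N1 N2.
Proof.
elim=> {N1 N2}; try by move=> *; split.
- by move=> N1 N2 _ IH l M; rewrite IH.
- by move=> N1 N2 N3 _ IH1 _ IH2 l M; rewrite IH1 IH2.
- by move=> N1 N1' N2 N2' _ IH1 _ IH2 l M; rewrite !hosts_par IH1 IH2.
- by move=> l M P Q _ l' M'; rewrite !hosts_site.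
- by move=> l M P Q l' M'; rewrite !hosts_site.
- by move=> N1 N2 l M; rewrite !hosts_par; tauto.
- by move=> N1 N2 N3 l M; rewrite !hosts_par; tauto.
- by move=> N l M; rewrite hosts_par; have := @hosts_s0 l M; tauto.
Qed.

Lemma red_same_hosts N N' : red N N' -> same_hosts N N'.
Proof.
elim=> {N N'}.
- by move=> l M a P Q l' M'; rewrite !hosts_site.
- by move=> N1 N1' N2 _ IH l M; rewrite !hosts_par IH.
- move=> N N1 N1' N' /seqv_same_hosts E1 _ IH /seqv_same_hosts E2 l M.
  by rewrite E1 IH E2.
- by move=> k Mk A l P Q Ml R _ l' M'; rewrite !hosts_par !hosts_site.
Qed.

Lemma coherent_sub N1 N2 : hosts_incl N1 N2 -> coherent N2 -> coherent N1.
Proof.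
move=> sub12 Hcoh k Mk Pk l Ml Pl t Hk Hkk Hl Hkl.
have [Pk' Hk'] : hosts N2 k Mk by apply: sub12; exists Pk.
have [Pl' Hl'] : hosts N2 l Ml by apply: sub12; exists Pl.
exact: Hcoh Hk' Hkk Hl' Hkl.
Qed.

Lemma final_states_nonempty_sub N1 N2 :
  hosts_incl N1 N2 -> final_states_nonempty N2 -> final_states_nonempty N1.
Proof. by move=> sub12 Hfin l M /sub12 /Hfin. Qed.

Lemma ok_site l M P : ok (ssite l M P) <-> (mtrust M l = Some lgood -> threads_ok M P).
Proof. by []. Qed.

Lemma seqv_ok N1 N2 : seqv N1 N2 -> final_states_nonempty N1 -> ok N1 <-> ok N2.
Proof.
elim=> {N1 N2}; try by move=> * /=; tauto.
- move=> N1 N2 /seqv_same_hosts E IH Hfin.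
  suff /IH -> : final_states_nonempty N1 by [].
  by apply: final_states_nonempty_sub Hfin => l M /E.
- move=> N1 N2 N3 /seqv_same_hosts E IH1 _ IH2 /[dup] /IH1 -> Hfin; apply: IH2.
  by apply: final_states_nonempty_sub Hfin => l M /E.
- move=> N1 N1' N2 N2' _ IH1 _ IH2 Hfin /=; rewrite IH1 ?IH2 //.
  + exact: final_states_nonempty_sub (@hosts_incl_parr N1 N2) Hfin.
  + exact: final_states_nonempty_sub (@hosts_incl_parl N1 N2) Hfin.
- move=> l M P Q HPQ Hfin; rewrite !ok_site (threads_ok_peq _ HPQ) //.
  by apply: Hfin; apply/hosts_site.
- move=> l M P Q _; rewrite !ok_site !threads_ok_par.
  by have := @threads_ok_bang M P; tauto.
Qed.

Lemma trust_le_lgood t : trust_le lgood t -> t = lgood.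
Proof. by move=> [|[]]. Qed.

(* The migrating agent is typed at the target either by the target's own check or,
   when the target trusts the source, by coherence: the source is then trustworthy
   itself, so its membrane has already verified the annotation [A]. *)
Lemma migrant_wt k Mk A l P Q Ml R :
  coherent (spar (ssite k Mk (ppar (pgo A l P) Q)) (ssite l Ml R)) ->
  ok (ssite k Mk (ppar (pgo A l P) Q)) -> mtrust Ml l = Some lgood ->
  mig_ok k Ml A P -> wt P (mpol Ml).
Proof.
move=> Hcoh Hk Hl; rewrite /mig_ok; case Ek: (mtrust Ml k) => [[| |]|] // Henf.
have [t [Ekk /trust_le_lgood Et]] := Hcoh l Ml R k Mk _ lgood (or_intror (or_introl erefl))
  Hl (or_introl erefl) Ek.
move: Ekk Hk; rewrite Et ok_site => Ekk /(_ Ekk) /threads_ok_par[+ _].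
rewrite threads_ok_thread // => -[_ /go_subterms_ok_go[HP Hgo]].
by split=> // w /HP /Henf.
Qed.

Lemma red_ok N N' : red N N' ->
  final_states_nonempty N -> coherent N -> ok N -> ok N'.
Proof.
elim=> {N N'}.
- move=> l M a P Q _ _; rewrite !ok_site !threads_ok_par => Hok /Hok[HP HQ].
  by split=> //; apply: threads_ok_act HP.
- move=> N1 N1' N2 _ IH Hfin Hcoh [H1 H2]; split=> //.
  have sub1 := @hosts_incl_parl N1 N2.
  by apply: IH H1; [apply: final_states_nonempty_sub Hfin | apply: coherent_sub Hcoh].
- move=> N N1 N1' N' HN HR IH HN' Hfin Hcoh Hok.
  have E := seqv_same_hosts HN; have E' := red_same_hosts HR.
  have Hfin1 : final_states_nonempty N1 by apply: final_states_nonempty_sub Hfin => l M /E.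
  apply/(seqv_ok HN'); last apply: IH => //.
  + by apply: final_states_nonempty_sub Hfin1 => l M /E'.
  + by apply: coherent_sub Hcoh => l M /E.
  + exact/(seqv_ok HN).
- move=> k Mk A l P Q Ml R Hmig _ Hcoh [Hk Hl]; split.
  + by move: Hk; rewrite !ok_site => Hk /Hk /threads_ok_par[].
  + move: Hl; rewrite !ok_site => Hl Htl; apply/threads_ok_par; split; last exact: Hl.
    have [HP Hgo] := migrant_wt Hcoh Hk Htl Hmig.
    exact: threads_ok_of_state HP Hgo.
Qed.
End Calculus.

Theorem mainTheorem7 (Act Loc : Type) (N N' : system Act Loc) :
  distinct_names N -> policies_ok N ->
  coherent N -> ok N ->
  red N N' ->
  coherent N' /\ ok N'.
Proof.
move=> _ Hpol Hcoh Hok Hred.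
have E := red_same_hosts Hred.
have Hfin : final_states_nonempty N by move=> l M [P /Hpol[[]]].
split; first by apply: coherent_sub Hcoh => l M /E.
exact: red_ok Hred Hfin Hcoh Hok.
Qed.
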